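(* Let $2\le w<n$. If a Steiner system $S(2,w,n)$ exists, then $q'_0(2,w,n)=\frac{n-1}{w-1}+1$.
   Context: $\mathbb{Z}_q=\{0,\dots,q-1\}$ (an alphabet); $\mathrm{wt}$ = number of nonzero coordinates; $d$ = Hamming distance; $J_q(n,w)$ = weight-$w$ words of $\mathbb{Z}_q^n$. An $(n,w,d)_q$ code of size $M$ is a subset $C\subseteq J_q(n,w)$ with $|C|=M$ and pairwise distances at least $d$. A Steiner system $S(t,k,n)$ is a pair $(N,B)$, $|N|=n$, $B$ a set of $k$-subsets (blocks) of $N$ with every $t$-subset of $N$ in exactly one block. For $t,k,n$ such that an $S(t,k,n)$ exists, $q'_0(t,k,n)$ is the smallest $q$ for which an $(n,k,2k-t+1)_q$ code of size $\binom{n}{t}/\binom{k}{t}$ exists. *)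

From mathcomp Require Import all_boot.
Unset Implicit Arguments.

Definition word (n q : nat) := {ffun 'I_n -> 'I_q}.

Definition wt {n q} (x : word n q) : nat := #|[set i | val (x i) != 0%N]|.

Definition hdist {n q} (x y : word n q) : nat := #|[set i | x i != y i]|.

Definition is_code (n w d q M : nat) (C : {set word n q}) : Prop :=
  [/\ #|C| = M,
      (forall x, x \in C -> wt x = w) &
      (forall x y, x \in C -> y \in C -> x != y -> d <= hdist x y)].

Definition code_exists (n w d q M : nat) : Prop :=
  exists C : {set word n q}, is_code n w d q M C.

Definition steiner_system (t k n : nat) (B : {set {set 'I_n}}) : Prop :=
  (forall b, b \in B -> #|b| = k) /\
  (forall T : {set 'I_n}, #|T| = t -> #|[set b in B | T \subset b]| = 1).

Definition steiner_exists (t k n : nat) : Prop :=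
  exists B : {set {set 'I_n}}, steiner_system t k n B.

Definition is_q0' (t k n q : nat) : Prop :=
  code_exists n k (2 * k - t + 1) q ('C(n, t) %/ 'C(k, t)) /\
  (forall q', code_exists n k (2 * k - t + 1) q' ('C(n, t) %/ 'C(k, t)) -> q <= q').

(* Let S(2,w,n) be a Steiner system, 2 <= w < n.  Every point lies on
   r = (n-1)/(w-1) blocks, there are b = C(n,2)/C(w,2) = n r / w blocks, and
   two distinct blocks meet in at most one point.

   In any block set with blocks of size w,
   pairwise meeting in at most one point and at most r blocks through each
   point, give the block b the word whose i-th letter is 0 if i is not in b and
   otherwise the position (1..r) of b among the blocks through i.  These words
   have weight w, and distinct blocks get words differing on the whole union
   of the blocks, i.e. on at least 2w-1 coordinates: an (n,w,2w-1)_{r+1} code.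

   Two weight-w words sharing a nonzero letter at the same
   coordinate are at distance at most 2w-2.  So in an (n,w,2w-1)_q code the
   codewords nonzero at a coordinate carry pairwise distinct nonzero letters
   there; each column has at most q-1 nonzero entries and, counting nonzero
   entries by columns, M w <= n (q-1).  With M = n r / w this gives q >= r+1. *)

From mathcomp Require Import all_boot.
From mathcomp Require Import zify.

Set Implicit Arguments.
Unset Strict Implicit.

Lemma double_count (X I : finType) (A : {set X}) (R : X -> I -> bool) :
  \sum_(i : I) #|[set x in A | R x i]| = \sum_(x in A) #|[set i | R x i]|.
Proof.
have card_sep (Y : finType) (D : {set Y}) (P : pred Y) :
    #|[set y in D | P y]| = \sum_(y in D) (P y : nat).
  rewrite -sum1_card big_mkcond [RHS]big_mkcond /=.
  by apply: eq_bigr => y _; rewrite !inE; case: (y \in D); case: (P y).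
under eq_bigr => i _ do rewrite card_sep.
rewrite exchange_big /=; apply: eq_bigr => x _.
have -> : [set i | R x i] = [set i in [set: I] | R x i] by apply/setP => i; rewrite !inE.
rewrite card_sep.
by apply: eq_bigl => i; rewrite inE.
Qed.

Lemma bin2_double (k : nat) : 'C(k, 2) * 2 = k * (k - 1).
Proof. by rewrite mulnC (mul_bin_left k 1) bin1 mulnC. Qed.

Lemma card_nonzero_letters (q : nat) : #|[set k : 'I_q | val k != 0]| <= q.-1.
Proof.
case: q => [|q]; first by apply: leq_trans (max_card _) _; rewrite card_ord.
apply: (@leq_trans #|[set~ (ord0 : 'I_q.+1)]|); last by rewrite cardsC1 card_ord.
by apply: subset_leq_card; apply/subsetP => k; rewrite !inE; apply: contra => /eqP ->.
Qed.

(* Two words agreeing in a nonzero letter differ only on the union of their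
   supports minus that coordinate. *)
Lemma hdist_common_letter (n q : nat) (x y : word n q) (i : 'I_n) :
  x i = y i -> val (x i) != 0 -> (hdist x y).+2 <= wt x + wt y.
Proof.
move=> xy_i x_i; rewrite /hdist /wt.
set Sx := [set j | _ (x j) != 0]; set Sy := [set j | _ (y j) != 0].
have i_both : i \in Sx :&: Sy by rewrite !inE -xy_i x_i.
have diff_sub : [set j | x j != y j] \subset (Sx :|: Sy) :\ i.
  apply/subsetP => j; rewrite !inE => xy_j.
  have -> : j != i by apply: contraNneq xy_j => ->; rewrite xy_i.
  apply: contraR xy_j; rewrite negb_or !negbK => /andP [/eqP x0 /eqP y0].
  by apply/eqP/val_inj; rewrite x0 y0.
have := subset_leq_card diff_sub; have := cardsD1 i (Sx :|: Sy).
have := cardsU Sx Sy; have : 0 < #|Sx :&: Sy| by apply/card_gt0P; exists i.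
have i_union : i \in Sx :|: Sy by rewrite inE (subsetP (subsetIl _ _) i i_both).
by rewrite i_union; lia.
Qed.

Definition column (n q : nat) (C : {set word n q}) (i : 'I_n) : {set word n q} :=
  [set x in C | val (x i) != 0].

(* In a code of weight w and minimum distance 2w-1, distinct codewords of a
   column carry distinct nonzero letters there. *)
Lemma column_bound (n w q : nat) (C : {set word n q}) (i : 'I_n) :
  (forall x, x \in C -> wt x = w) ->
  (forall x y, x \in C -> y \in C -> x != y -> 2 * w - 2 + 1 <= hdist x y) ->
  #|column C i| <= q.-1.
Proof.
move=> C_wt C_dist.
have letter_inj : {in column C i &, injective (fun x : word n q => x i)}.
  move=> x y; rewrite !inE => /andP [xC x_i] /andP [yC _] xy_i.
  apply/eqP; apply: contraT => xy.
  have := hdist_common_letter xy_i x_i; have := C_dist x y xC yC xy.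
  by rewrite (C_wt x xC) (C_wt y yC); lia.
rewrite -(card_in_imset letter_inj); apply: leq_trans (card_nonzero_letters q).
apply: subset_leq_card; apply/subsetP => a /imsetP [x]; rewrite !inE => /andP [_ x_i] ->.
exact: x_i.
Qed.

Lemma sum_columns (n w q : nat) (C : {set word n q}) :
  (forall x, x \in C -> wt x = w) -> \sum_(i : 'I_n) #|column C i| = #|C| * w.
Proof.
move=> C_wt; rewrite (double_count C (fun x i => val (x i) != 0)) -sum_nat_const.
exact: eq_bigr.
Qed.

Lemma code_size_bound (n w q M : nat) :
  code_exists n w (2 * w - 2 + 1) q M -> M * w <= n * q.-1.
Proof.
move=> [C [<- C_wt C_dist]]; rewrite -(sum_columns C_wt).
have -> : n * q.-1 = \sum_(i : 'I_n) q.-1 by rewrite sum_nat_const card_ord.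
by apply: leq_sum => i _; apply: (column_bound _ C_wt C_dist).
Qed.

Definition blocks_through (n : nat) (B : {set {set 'I_n}}) (x : 'I_n) :
  {set {set 'I_n}} := [set b in B | x \in b].

Section SteinerSystem.
Variables (n w : nat) (B : {set {set 'I_n}}).
Hypothesis S : steiner_system 2 w n B.

Lemma steiner_pair_block (x y : 'I_n) :
  x != y -> #|[set b in B | (x \in b) && (y \in b)]| = 1.
Proof.
move=> xy; case: S => _ S_pairs.
rewrite -(S_pairs [set x; y]); last by rewrite cards2 xy.
by apply: eq_card => b; rewrite !inE subUset !sub1set.
Qed.

Lemma steiner_meet_le1 (b b' : {set 'I_n}) :
  b \in B -> b' \in B -> b != b' -> #|b :&: b'| <= 1.
Proof.
move=> bB b'B bb'; rewrite leqNgt; apply/negP => /card_gt1P [x [y [xbb' ybb' xy]]].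
move: xbb' ybb'; rewrite !inE => /andP [xb xb'] /andP [yb yb'].
have /cards1P [c Ec] := introT eqP (steiner_pair_block xy).
have : b \in [set c in B | (x \in c) && (y \in c)] by rewrite inE bB xb yb.
have : b' \in [set c in B | (x \in c) && (y \in c)] by rewrite inE b'B xb' yb'.
by rewrite Ec !inE => /eqP b'c /eqP bc; rewrite bc b'c eqxx in bb'.
Qed.

(* The blocks through x partition the n-1 other points into parts of size
   w-1, so every point lies on (n-1)/(w-1) blocks. *)
Lemma steiner_replication (x : 'I_n) :
  #|blocks_through B x| * (w - 1) = n - 1.
Proof.
have := double_count (blocks_through B x) (fun b y => y \in b :\ x).
have -> : \sum_(b in blocks_through B x) #|[set y | y \in b :\ x]| =
          #|blocks_through B x| * (w - 1).
  rewrite -sum_nat_const; apply: eq_bigr => b; rewrite inE => /andP [bB xb].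
  have -> : [set y | y \in b :\ x] = b :\ x by apply/setP => y; rewrite inE.
  by have := cardsD1 x b; rewrite xb (S.1 b bB) => ->; rewrite add1n subn1.
move=> <-; rewrite (bigD1 x) //= (@eq_card0 _ [set _ in _ | _]) ?add0n; last first.
  by move=> b; rewrite !inE eqxx andbF.
have -> : n - 1 = \sum_(y < n | y != x) 1.
  by rewrite sum1_card cardC1 card_ord subn1.
apply: eq_bigr => y yx; rewrite -(steiner_pair_block (x := x) (y := y)) 1?eq_sym //.
by apply: eq_card => b; rewrite !inE yx /=; case: (b \in B); case: (x \in b).
Qed.

Hypothesis w_ge2 : 2 <= w.

Lemma steiner_degree (x : 'I_n) : #|blocks_through B x| = (n - 1) %/ (w - 1).
Proof. by rewrite -(steiner_replication x) mulnK //; lia. Qed.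

Lemma steiner_incidences : #|B| * w = n * ((n - 1) %/ (w - 1)).
Proof.
have := double_count B (fun b (y : 'I_n) => y \in b).
under eq_bigr => y _ do rewrite -/(blocks_through B y) steiner_degree.
rewrite sum_nat_const card_ord => ->; rewrite -sum_nat_const.
apply: eq_bigr => b bB; rewrite -(S.1 b bB).
by apply: eq_card => y; rewrite inE.
Qed.

Lemma steiner_num_blocks : 0 < n -> 'C(n, 2) %/ 'C(w, 2) = #|B|.
Proof.
move=> n_gt0; have x0 : 'I_n := Ordinal n_gt0.
have pairs : 'C(n, 2) = #|B| * 'C(w, 2).
  apply/eqP; rewrite -(eqn_pmul2r (isT : 0 < 2)) -mulnA !bin2_double mulnA.
  by rewrite steiner_incidences -mulnA -(steiner_degree x0) steiner_replication.
by rewrite pairs mulnK // bin_gt0.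
Qed.

End SteinerSystem.

Section LabellingCode.
Variables (n w r : nat) (B : {set {set 'I_n}}).
Hypothesis block_size : forall b, b \in B -> #|b| = w.
Hypothesis blocks_meet_le1 : forall b b', b \in B -> b' \in B -> b != b' -> #|b :&: b'| <= 1.
Hypothesis degree_le : forall i, #|blocks_through B i| <= r.

Definition label (b : {set 'I_n}) (i : 'I_n) : 'I_r.+1 :=
  if i \in b then inord (index b (enum (blocks_through B i))).+1 else ord0.

Definition block_word (b : {set 'I_n}) : word n r.+1 := [ffun i => label b i].

Lemma label_val (b : {set 'I_n}) (i : 'I_n) : b \in B -> i \in b ->
  val (label b i) = (index b (enum (blocks_through B i))).+1.
Proof.
move=> bB ib; rewrite /label ib /= inordK // ltnS.
apply: leq_trans (degree_le i); rewrite cardE index_mem mem_enum.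
by rewrite inE bB ib.
Qed.

Lemma block_word_support (b : {set 'I_n}) :
  b \in B -> [set i | val (block_word b i) != 0] = b.
Proof.
move=> bB; apply/setP => i; rewrite inE ffunE.
by case ib: (i \in b); [rewrite label_val | rewrite /label ib].
Qed.

Lemma label_inj (b b' : {set 'I_n}) (i : 'I_n) :
  b \in B -> b' \in B -> i \in b -> i \in b' -> label b i = label b' i -> b = b'.
Proof.
move=> bB b'B ib ib' /(congr1 val); rewrite !label_val // => -[same_index].
have b_in : b \in enum (blocks_through B i) by rewrite mem_enum inE bB ib.
have b'_in : b' \in enum (blocks_through B i) by rewrite mem_enum inE b'B ib'.
by rewrite -(nth_index b b_in) same_index nth_index.
Qed.

Lemma block_word_dist (b b' : {set 'I_n}) :
  b \in B -> b' \in B -> b != b' -> #|b :|: b'| <= hdist (block_word b) (block_word b').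
Proof.
move=> bB b'B bb'; apply: subset_leq_card; apply/subsetP => i; rewrite !inE !ffunE.
case ib: (i \in b); case ib': (i \in b') => //= _; apply/eqP => same.
- by move/eqP: bb'; apply; exact: label_inj same.
- by move/(congr1 val): same; rewrite (label_val bB ib) /label ib'.
- by move/(congr1 val): same; rewrite (label_val b'B ib') /label ib.
Qed.

Lemma labelling_code : code_exists n w (2 * w - 2 + 1) r.+1 #|B|.
Proof.
exists (block_word @: B); split.
- apply: card_in_imset => b b' bB b'B same.
  by rewrite -(block_word_support bB) -(block_word_support b'B) same.
- by move=> _ /imsetP [b bB ->]; rewrite /wt block_word_support // block_size.
- move=> _ _ /imsetP [b bB ->] /imsetP [b' b'B ->] words_neq.
  have bb' : b != b' by apply: contraNneq words_neq => ->.
  have := block_word_dist bB b'B bb'.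
  have := cardsU b b'; have := blocks_meet_le1 bB b'B bb'.
  have : 0 < #|b :|: b'|.
    by rewrite card_gt0 setU_eq0; apply: contra bb' => /andP [/eqP -> /eqP ->].
  by rewrite (block_size bB) (block_size b'B); lia.
Qed.

End LabellingCode.

Theorem mainTheorem8 (w n : nat) :
  2 <= w -> w < n -> steiner_exists 2 w n ->
  is_q0' 2 w n ((n - 1) %/ (w - 1) + 1).
Proof.
move=> w_ge2 w_lt_n [B S].
have n_gt0 : 0 < n by lia.
rewrite /is_q0' (steiner_num_blocks S) // [_ %/ _ + 1]addn1; split.
- apply: labelling_code => [b /S.1 | b b' | i] //; first exact: (steiner_meet_le1 S).
  by rewrite (steiner_degree S).
- move=> q /code_size_bound; rewrite (steiner_incidences S) // leq_pmul2l //.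
  have : 0 < (n - 1) %/ (w - 1) by rewrite divn_gt0; lia.
  lia.
Qed.
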